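(* Let $(X,\tau)$ be a Hausdorff extended locally convex space. Then: (i) if $A\subseteq X$ is absolutely convex and bounded in $(X,\tau)$, then $A\subseteq X_{fin}$; (ii) if $U$ is an absolutely convex neighborhood of $0_X$ in $(X,\tau)$ that is bounded in $(X,\tau)$, then the Minkowski functional $\rho_U$ is a $\tau$-continuous extended norm on $X$, and $X_{fin}=\{x\in X:\rho_U(x)<\infty\}$.
   Context: An extended seminorm on a vector space $X$ over $\mathbb{R}$ or $\mathbb{C}$ is a map $\rho:X\to[0,\infty]$ with $\rho(\alpha x)=|\alpha|\rho(x)$ and $\rho(x+y)\le\rho(x)+\rho(y)$; it is an extended norm if moreover $\rho(x)=0$ only for $x=0_X$. An extended locally convex space $(X,\tau)$ is a vector space with the topology induced by a family $\{\rho_i\}$ of extended seminorms (neighborhood base at $x_0$: $\{x:\max_{i\in J}\rho_i(x-x_0)<\varepsilon\}$, $J$ finite, $\varepsilon>0$). $X_{fin}=\{x\in X:\rho(x)<\infty$ for every $\tau$-continuous extended seminorm $\rho\}$, equivalently the intersection of all $\tau$-open linear subspaces. A set $A\subseteq X$ is bounded in $(X,\tau)$ if for every neighborhood $U$ of $0_X$ there exist $c>0$ and a finite set $P\subseteq A$ with $A\subseteq P+cU$. For absolutely convex $U$, $\rho_U(x)=\inf\{\lambda>0:x\in\lambda U\}$ ($\inf\emptyset=\infty$). *)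

From HB Require Import structures.
From mathcomp Require Import all_boot all_order all_algebra.
From mathcomp Require Import all_classical all_reals all_analysis.
From mathcomp Require Import complex.
Set Implicit Arguments. Unset Strict Implicit. Unset Printing Implicit Defensive.
Import Order.TTheory GRing.Theory Num.Theory.
Local Open Scope classical_set_scope.
Local Open Scope ring_scope.

(* The scalar field K is R or C (= R[i]).  [absK] is the modulus |.| : K -> R
   and [inK] the canonical embedding R -> K (used for positive real scalars). *)
Inductive RorC (R : realType) : forall K : numFieldType, (K -> R) -> (R -> K) -> Prop :=
  | RorC_R : @RorC R R (fun a : R => `|a|) (fun r : R => r)
  | RorC_C : @RorC R (complex R) (@Normc.normc R) (fun r : R => (r%:C)%C).

Section ELCS.
Variables (R : realType) (K : numFieldType) (absK : K -> R) (inK : R -> K).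
Variable (X : lmodType K).

Definition ext_seminorm (rho : X -> \bar R) : Prop :=
  [/\ (forall x : X, (0 <= rho x)%E),
      (forall (a : K) (x : X), rho (a *: x) = ((absK a)%:E * rho x)%E) &
      (forall x y : X, (rho (x + y)%R <= rho x + rho y)%E)].

Definition ext_norm (rho : X -> \bar R) : Prop :=
  ext_seminorm rho /\ (forall x, rho x = 0%E -> x = 0).

Variables (I : Type) (P : I -> X -> \bar R).

Definition tau_ball (J : seq I) (x0 : X) (eps : R) : set X :=
  [set x | (\big[maxe/0%E]_(i <- J) P i (x - x0) < eps%:E)%E].

Definition tau_nbhs (x0 : X) (N : set X) : Prop :=
  exists (J : seq I) (eps : R), 0 < eps /\ tau_ball J x0 eps `<=` N.

Definition tau_open (S : set X) : Prop := forall x, S x -> tau_nbhs x S.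

Definition tau_hausdorff : Prop :=
  forall x y : X, x <> y ->
    exists U V, [/\ tau_nbhs x U, tau_nbhs y V & U `&` V = set0].

Definition tau_continuous (rho : X -> \bar R) : Prop :=
  forall x0 (N : set (\bar R)), nbhs (rho x0) N -> tau_nbhs x0 (rho @^-1` N).

Definition X_fin : set X :=
  [set x | forall rho, ext_seminorm rho -> tau_continuous rho -> (rho x < +oo)%E].

Definition absolutely_convex (A : set X) : Prop :=
  forall x y (a b : K), A x -> A y -> absK a + absK b <= 1 -> A (a *: x + b *: y).

Definition tau_bounded (A : set X) : Prop :=
  forall U, tau_nbhs 0 U ->
    exists (c : R) (F : seq X), [/\ 0 < c, (forall p, p \in F -> A p) &
      A `<=` [set z | exists p u, [/\ p \in F, U u & z = p + inK c *: u]]].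

(* Minkowski functional rho_U(x) = inf {l > 0 : x \in l U}, inf set0 = +oo *)
Definition minkowski_fun (U : set X) (x : X) : \bar R :=
  ereal_inf [set l%:E | l in [set l : R | 0 < l /\ exists2 u, U u & x = inK l *: u]].

End ELCS.

From HB Require Import structures.
From mathcomp Require Import all_boot all_order all_algebra.
From mathcomp Require Import all_classical all_reals all_analysis.
From mathcomp Require Import complex.
From mathcomp Require Import ring lra.
Import Order.TTheory GRing.Theory Num.Theory.
Import numFieldNormedType.Exports.
Set Implicit Arguments.
Unset Strict Implicit.
Local Open Scope classical_set_scope.
Local Open Scope ring_scope.

(* Let [rho] be a continuous extended seminorm and [A] bounded and absolutely
   convex, so that [A] is covered by [n] balls [p + c V], [V] the unit ball of
   [rho].  For [y] in [A], two of the [n + 1] points [k / (n + 1) y] of [A] lie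
   in the same ball, whence [rho y / (n + 1) < 2 c]: [rho] is bounded on [A].
   For a bounded neighbourhood [U], this bound applied to the defining
   seminorms [P i] shows that [rho_U x = 0] forces [P i x = 0] for all [i],
   hence [x = 0] by the Hausdorff property.  Continuity of [rho_U] follows
   from [rho_U <= 1] on a basic ball, and [X_fin = {rho_U < oo}] because
   [X_fin] is stable under scaling and contains [U]. *)

Lemma pigeonhole_seq (T : eqType) (F : seq T) (g : nat -> T) :
  (forall k, (k <= size F)%N -> g k \in F) ->
  exists i j, [/\ (i < j)%N, (j <= size F)%N & g i = g j].
Proof.
move=> gF; set s := map g (iota 0 (size F).+1).
have : ~~ uniq s.
  apply/negP => /uniq_leq_size le_sF.
  have : (size s <= size F)%N.
    apply: le_sF => q /mapP[k]; rewrite mem_iota add0n => /andP[_ kF] ->.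
    exact: gF.
  by rewrite size_map size_iota ltnn.
move=> /(uniqPn (g 0))[i [j []]]; rewrite size_map size_iota ltnS => ij jF.
have iF : (i < (size F).+1)%N by rewrite ltnS (leq_trans (ltnW ij)).
rewrite !(nth_map 0%N (g 0)) ?size_iota ?ltnS // !nth_iota ?ltnS // !add0n.
by exists i, j.
Qed.

Lemma nbhs_EFin_ball (R : realType) (r : R) (N : set (\bar R)) :
  nbhs r%:E N -> exists2 d : R, 0 < d & forall y, `|r - y| < d -> N y%:E.
Proof.
move=> rN; have /nbhs_ballP[d d0 dN] : nbhs r (fun y => N y%:E) by exact: rN.
by exists d.
Qed.

Lemma eq0_of_scale_bounded (R : realType) (e : \bar R) (B : R) : (0 <= e)%E ->
  (forall s, 0 <= s -> (s%:E * e < B%:E)%E) -> e = 0%E.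
Proof.
move=> e0 ltB; have B0 : 0 < B by have := ltB 0 (lexx 0); rewrite mul0e lte_fin.
case: e e0 ltB => [q| |] // q0 ltB; last first.
  by have := ltB 1 ler01; rewrite mul1e ltNge leey.
have [->//|qn0] := eqVneq q 0.
have qp : 0 < q by rewrite lt_def qn0 -lee_fin.
by have := ltB (B / q) (ltW (divr_gt0 B0 qp)); rewrite -EFinM divfK ?ltxx.
Qed.

Section Scalars.
Variables (R : realType) (K : numFieldType) (absK : K -> R) (inK : R -> K).
Hypothesis hK : RorC absK inK.

Lemma absK_ge0 a : 0 <= absK a.
Proof. by case: hK a => [|[x y]]; [exact: normr_ge0 | exact: sqrtr_ge0]. Qed.

Lemma absKM a b : absK (a * b) = absK a * absK b.
Proof. by case: hK a b; [exact: normrM | exact: Normc.normcM]. Qed.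

Lemma absK_eq0 a : absK a = 0 -> a = 0.
Proof.
by case: hK a => [a /eqP|]; [rewrite normr_eq0 => /eqP | exact: Normc.eq0_normc].
Qed.

Lemma absK_inK r : absK (inK r) = `|r|.
Proof.
by case: hK r => // r; rewrite /Normc.normc /= expr0n /= addr0 sqrtr_sqr.
Qed.

Lemma inKB r s : inK (r - s) = inK r - inK s.
Proof. by case: hK r s => // r s; rewrite (rmorphB (real_complex R)). Qed.

Lemma inKM r s : inK (r * s) = inK r * inK s.
Proof. by case: hK r s => // r s; rewrite (rmorphM (real_complex R)). Qed.

Lemma inK1 : inK 1 = 1.
Proof. by case: hK => //; rewrite (rmorph1 (real_complex R)). Qed.

Lemma inK0 : inK 0 = 0.
Proof. by rewrite -(subrr 1) inKB subrr. Qed.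

Lemma absK0 : absK 0 = 0.
Proof. by rewrite -inK0 absK_inK normr0. Qed.

Lemma absK1 : absK 1 = 1.
Proof. by rewrite -inK1 absK_inK normr1. Qed.

Lemma absKN1 : absK (-1) = 1.
Proof. by rewrite -[-1]sub0r -inK1 -inK0 -inKB absK_inK sub0r normrN normr1. Qed.

Lemma ger0_absK_inK r : 0 <= r -> absK (inK r) = r.
Proof. by move=> r0; rewrite absK_inK ger0_norm. Qed.

Lemma absK_gt0 a : a != 0 -> 0 < absK a.
Proof.
by move=> a0; rewrite lt_def absK_ge0 andbT; apply: contra a0 => /eqP/absK_eq0->.
Qed.

Lemma absKV a : a != 0 -> absK a^-1 = (absK a)^-1.
Proof.
move=> a0; have absa0 : absK a != 0 by rewrite gt_eqF ?absK_gt0.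
by apply: (mulfI absa0); rewrite -absKM !mulfV // absK1.
Qed.

Lemma inK_eq0 r : (inK r == 0) = (r == 0).
Proof.
apply/eqP/eqP => [r0|->]; last exact: inK0.
by apply/eqP; rewrite -normr_eq0 -absK_inK r0 absK0.
Qed.

Variable X : lmodType K.
Implicit Types (rho : X -> \bar R) (A : set X).

Lemma seminorm_ge0 rho x : ext_seminorm absK rho -> (0 <= rho x)%E.
Proof. by case. Qed.

Lemma seminorm_triangle rho x y : ext_seminorm absK rho ->
  (rho (x + y)%R <= rho x + rho y)%E.
Proof. by case. Qed.

Lemma seminorm0 rho : ext_seminorm absK rho -> rho 0 = 0%E.
Proof. by case=> _ rhoZ _; rewrite -(scale0r 0) rhoZ absK0 mul0e. Qed.

Lemma seminormN rho x : ext_seminorm absK rho -> rho (- x) = rho x.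
Proof. by case=> _ rhoZ _; rewrite -scaleN1r rhoZ absKN1 mul1e. Qed.

Lemma seminorm_subC rho x y : ext_seminorm absK rho -> rho (x - y) = rho (y - x).
Proof. by move=> hrho; rewrite -opprB seminormN. Qed.

Lemma seminormZ_inK rho c x : ext_seminorm absK rho -> 0 <= c ->
  rho (inK c *: x) = (c%:E * rho x)%E.
Proof. by case=> _ rhoZ _ c0; rewrite rhoZ ger0_absK_inK. Qed.

Lemma absconvex_scale A t u : absolutely_convex absK A -> absK t <= 1 -> A u ->
  A (t *: u).
Proof.
move=> hA t1 Au; have := hA u u t 0 Au Au.
by rewrite absK0 addr0 scale0r addr0; apply.
Qed.

Lemma seminorm_lt_of_segment_cover rho A (F : seq X) (c : R) (y : X) :
  ext_seminorm absK rho ->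
  (forall z, A z -> exists2 p, p \in F & (rho (z - p)%R < c%:E)%E) ->
  (forall t, 0 <= t <= 1 -> A (inK t *: y)) ->
  (rho y < ((c + c) * (size F).+1%:R)%:E)%E.
Proof.
move=> hrho cover seg; set N : R := (size F).+1%:R.
have N0 : 0 < N by rewrite ltr0n.
pose t k : R := k%:R / N.
have t01 k : (k <= size F)%N -> 0 <= t k <= 1.
  move=> kF; rewrite /t divr_ge0 ?ler0n ?(ltW N0) //=.
  by rewrite ler_pdivrMr // mul1r ler_nat leqW.
have /choice[g hg] : forall k, exists p, (k <= size F)%N ->
    p \in F /\ (rho (inK (t k) *: y - p)%R < c%:E)%E.
  move=> k; have [/t01/seg/cover[p pF lt_p]|] := leqP k (size F); first by exists p.
  by exists 0.
have [i [j [ij jF gij]]] := pigeonhole_seq (fun k kF => (hg k kF).1).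
have iF : (i <= size F)%N := leq_trans (ltnW ij) jF.
have close : (rho (inK (t j - t i)%R *: y) < (c + c)%:E)%E.
  have -> : inK (t j - t i) *: y =
      (inK (t j) *: y - g j) + (g i - inK (t i) *: y).
    by rewrite inKB scalerBl gij addrA subrK.
  apply: le_lt_trans (seminorm_triangle _ _ hrho) _.
  rewrite EFinD; apply: lteD; first by case: (hg j jF).
  by rewrite seminorm_subC //; case: (hg i iF).
have gap : N^-1 <= t j - t i.
  rewrite /t -mulrBl -[X in X <= _]mul1r ler_pM2r ?invr_gt0 //.
  by rewrite lerBrDr addrC natr1 ler_nat.
rewrite mulrC EFinM -lte_pdivrMl //; apply: le_lt_trans close.
rewrite seminormZ_inK ?(le_trans _ gap) ?invr_ge0 ?(ltW N0) //.
by apply: lee_wpmul2r; rewrite ?lee_fin ?seminorm_ge0.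
Qed.

Section Minkowski.
Variable U : set X.
Hypotheses (hU : absolutely_convex absK U) (U0 : U 0).
Local Notation mk := (minkowski_fun inK U).

Lemma minkowski_le x l u : 0 < l -> U u -> x = inK l *: u -> (mk x <= l%:E)%E.
Proof.
by move=> l0 Uu ->; apply: ereal_inf_lbound; exists l => //; split => //; exists u.
Qed.

Lemma minkowski_lt x (y : \bar R) : (mk x < y)%E ->
  exists l u, [/\ 0 < l, U u, x = inK l *: u & (l%:E < y)%E].
Proof. by move/ereal_inf_lt => [_ [l [l0 [u Uu ->]] <-] ly]; exists l, u. Qed.

Lemma minkowski_ge0 x : (0 <= mk x)%E.
Proof. by apply/ereal_infP => _ [l [l0 _] <-]; rewrite lee_fin ltW. Qed.

Lemma minkowski0 : mk 0 = 0%E.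
Proof.
apply/eqP; rewrite eq_le minkowski_ge0 andbT; apply/lee_addgt0Pr => e e0.
by rewrite add0e (minkowski_le e0 U0) // scaler0.
Qed.

Lemma minkowski_le1 u : U u -> (mk u <= 1%:E)%E.
Proof. by move=> Uu; apply: (minkowski_le ltr01 Uu); rewrite inK1 scale1r. Qed.

Lemma minkowski_le_mul x y c : 0 < c ->
  (forall l u, 0 < l -> U u -> x = inK l *: u -> (mk y <= (c * l)%:E)%E) ->
  (mk y <= c%:E * mk x)%E.
Proof.
move=> c0 mk_y; case E: (mk x) (minkowski_ge0 x) => [r| |] // _; last first.
  by rewrite gt0_muley ?lte_fin // leey.
apply/lee_addgt0Pr => e e0.
have /minkowski_lt[l [u [l0 Uu x_lu]]] : (mk x < (r + e / c)%:E)%E.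
  by rewrite E lte_fin ltrDl divr_gt0.
rewrite lte_fin => lr; apply: le_trans (mk_y _ _ l0 Uu x_lu) _.
rewrite -EFinM -EFinD lee_fin.
have : c * l < c * (r + e / c) by rewrite ltr_pM2l.
by rewrite mulrDr mulrCA divff ?mulr1 ?gt_eqF // => /ltW.
Qed.

Lemma minkowski_scale_le a x : a != 0 -> (mk (a *: x) <= (absK a)%:E * mk x)%E.
Proof.
move=> a0; have absa0 := absK_gt0 a0.
have inKa0 : inK (absK a) != 0 by rewrite inK_eq0 gt_eqF.
apply: minkowski_le_mul => // l u l0 Uu ->.
apply: (@minkowski_le _ _ ((a / inK (absK a)) *: u)); first by rewrite mulr_gt0.
  apply: absconvex_scale => //.
  by rewrite absKM absKV // ger0_absK_inK ?absK_ge0 // mulfV ?gt_eqF.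
by rewrite !scalerA inKM; congr (_ *: _); field.
Qed.

Lemma minkowski_triangle x y : (mk (x + y)%R <= mk x + mk y)%E.
Proof.
have mk_neqNy z : mk z != -oo%E by case: (mk z) (minkowski_ge0 z).
case Ex: (mk x) (minkowski_ge0 x) => [r| |] // _; last by rewrite addye ?leey.
case Ey: (mk y) (minkowski_ge0 y) => [s| |] // _; last by rewrite addey ?leey.
apply/lee_addgt0Pr => e e0.
have /minkowski_lt[l [u [l0 Uu -> lr]]] : (mk x < (r + e / 2)%:E)%E.
  by rewrite Ex lte_fin ltrDl divr_gt0.
have /minkowski_lt[m [v [m0 Uv -> ms]]] : (mk y < (s + e / 2)%:E)%E.
  by rewrite Ey lte_fin ltrDl divr_gt0.
move: lr ms; rewrite !lte_fin => lr ms.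
have lm0 : 0 < l + m by rewrite addr_gt0.
have l_lm : 0 <= l / (l + m) by rewrite divr_ge0 // ltW.
have m_lm : 0 <= m / (l + m) by rewrite divr_ge0 // ltW.
apply: (@le_trans _ _ (l + m)%:E); last by rewrite -!EFinD lee_fin; lra.
apply: (minkowski_le lm0 (@hU u v (inK (l / (l + m))) (inK (m / (l + m))) Uu Uv _)).
  by rewrite !ger0_absK_inK // -mulrDl divff ?gt_eqF.
by rewrite scalerDr !scalerA -!inKM; congr (inK _ *: _ + inK _ *: _); field;
  rewrite gt_eqF.
Qed.

Lemma minkowski_seminorm : ext_seminorm absK mk.
Proof.
split; [exact: minkowski_ge0 | move=> a x | exact: minkowski_triangle].
have [->|a0] := eqVneq a 0; first by rewrite scale0r absK0 mul0e minkowski0.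
have absa0 := absK_gt0 a0.
apply/eqP; rewrite eq_le minkowski_scale_le //=.
have := minkowski_scale_le (a *: x) (invr_neq0 a0).
rewrite scalerA mulVf // scale1r => le_mk.
rewrite -(@lee_pmul2l _ (absK a)^-1%:E) ?lte_fin ?invr_gt0 //.
by rewrite muleA -EFinM mulVf ?gt_eqF // mul1e -absKV.
Qed.

Lemma minkowski_eq0_ray x s : mk x = 0%E -> 0 <= s -> U (inK s *: x).
Proof.
move=> mkx0 s0; have s1 : 0 < s + 1 by rewrite ltr_wpDl.
have /minkowski_lt[l [u [l0 Uu -> ls]]] : (mk x < (s + 1)^-1%:E)%E.
  by rewrite mkx0 lte_fin invr_gt0.
move: ls; rewrite lte_fin -div1r ltr_pdivlMr // => ls.
rewrite scalerA -inKM; apply: absconvex_scale => //.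
by rewrite ger0_absK_inK ?mulr_ge0 ?(ltW l0) //; nra.
Qed.

End Minkowski.

Section Topology.
Variables (I : Type) (P : I -> X -> \bar R).
Hypothesis hP : forall i, ext_seminorm absK (P i).

Lemma tau_ballP J x0 e z : tau_ball P J x0 e z <->
  0 < e /\ forall i, List.In i J -> (P i (z - x0)%R < e%:E)%E.
Proof.
rewrite /tau_ball /=; elim: J => [|j J IH]; rewrite ?big_nil ?big_cons.
  by rewrite lte_fin; split => [|[]].
rewrite gt_max; split => [/andP[Pj /IH[e0 PJ]]|[e0 PJ]].
  by split => // i [<-|/PJ].
by apply/andP; split; [apply: PJ; left | apply/IH; split => // i iJ; apply: PJ; right].
Qed.

Lemma tau_nbhs_mem x0 N : tau_nbhs P x0 N -> N x0.
Proof.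
move=> [J [e [e0 ballN]]]; apply/ballN/tau_ballP; split => // i _.
by rewrite subrr seminorm0 ?lte_fin.
Qed.

Lemma tau_nbhs0_lt1 i : tau_nbhs P 0 [set z | (P i z < 1%:E)%E].
Proof.
by exists [:: i], 1; split => // z /tau_ballP[_]; rewrite subr0; apply; left.
Qed.

Lemma tau_hausdorff_eq0 x : tau_hausdorff P -> (forall i, P i x = 0%E) -> x = 0.
Proof.
move=> hT Px0; apply: contrapT => /hT[V [W [[J [e [e0 ballV]]] Wnbhs VW]]].
have [J' [e' [e'0 ballW]]] := Wnbhs.
have : (V `&` W) 0.
  split; [apply/ballV/tau_ballP | apply/ballW/tau_ballP]; split => // i _.
    by rewrite sub0r seminormN // Px0 lte_fin.
  by rewrite subr0 seminorm0 // lte_fin.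
by rewrite VW.
Qed.

Lemma tau_continuous_nbhs0 rho : ext_seminorm absK rho -> tau_continuous P rho ->
  tau_nbhs P 0 [set z | (rho z < 1%:E)%E].
Proof.
move=> hrho /(_ 0 [set e | (e < 1%:E)%E]); rewrite seminorm0 //; apply.
exact: (@nbhs_open_ereal_lt R 0 (fun=> 1) ltr01).
Qed.

Lemma tau_bounded_seminorm_cover rho A : ext_seminorm absK rho ->
  tau_nbhs P 0 [set z | (rho z < 1%:E)%E] -> tau_bounded inK P A ->
  exists c (F : seq X), forall z, A z -> exists2 p, p \in F & (rho (z - p)%R < c%:E)%E.
Proof.
move=> hrho rho_nbhs /(_ _ rho_nbhs)[c [F [c0 _ cover]]]; exists c, F.
move=> z /cover[p [u [pF /= u1 ->]]]; exists p => //.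
rewrite addrC addKr seminormZ_inK ?ltW //.
by rewrite -[X in (_ < X)%E]mule1 lte_pmul2l // lte_fin.
Qed.

Lemma absconvex_bounded_seminorm_ub rho A : ext_seminorm absK rho ->
  tau_nbhs P 0 [set z | (rho z < 1%:E)%E] ->
  absolutely_convex absK A -> tau_bounded inK P A ->
  exists B : R, forall y, A y -> (rho y < B%:E)%E.
Proof.
move=> hrho rho_nbhs hA /(tau_bounded_seminorm_cover hrho rho_nbhs)[c [F cover]].
exists ((c + c) * (size F).+1%:R) => y Ay.
apply: seminorm_lt_of_segment_cover hrho cover _ => t /andP[t0 t1].
by apply: absconvex_scale; rewrite ?ger0_absK_inK.
Qed.

Lemma absconvex_bounded_sub_Xfin A : absolutely_convex absK A ->
  tau_bounded inK P A -> A `<=` X_fin absK P.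
Proof.
move=> hA hB x Ax rho hrho rho_cont.
have [B ltB] := absconvex_bounded_seminorm_ub hrho
  (tau_continuous_nbhs0 hrho rho_cont) hA hB.
exact: lt_trans (ltB x Ax) (ltry B).
Qed.

Lemma Xfin_scale a u : X_fin absK P u -> X_fin absK P (a *: u).
Proof.
move=> Xu rho hrho rho_cont; case: (hrho) => _ -> _.
by apply: lte_mul_pinfty; rewrite ?lee_fin ?absK_ge0 //; apply: Xu.
Qed.

Lemma seminorm_le_on_ball rho J eps d z : ext_seminorm absK rho -> 0 < d ->
  tau_ball P J 0 eps `<=` [set z | (rho z <= 1%:E)%E] ->
  tau_ball P J 0 (d * eps) z -> (rho z <= d%:E)%E.
Proof.
move=> hrho d0 ball_le1 /tau_ballP[deps0 zball].
have d'0 : 0 <= d^-1 by rewrite invr_ge0 ltW.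
have /ball_le1 : tau_ball P J 0 eps (inK d^-1 *: z).
  apply/tau_ballP; split; first by rewrite -(pmulr_rgt0 _ d0).
  move=> i iJ; rewrite subr0 seminormZ_inK //.
  have -> : eps = d^-1 * (d * eps) by rewrite mulrA mulVf ?mul1r ?gt_eqF.
  by rewrite EFinM lte_pmul2l ?lte_fin ?invr_gt0 // -(subr0 z) zball.
move=> /= le1.
have -> : z = inK d *: (inK d^-1 *: z).
  by rewrite scalerA -inKM mulfV ?gt_eqF // inK1 scale1r.
by rewrite seminormZ_inK ?(ltW d0) // -[X in (_ <= X)%E]mule1 lee_pmul2l ?lte_fin.
Qed.

(* Where [rho] is infinite it is locally constant, since [rho] is finite near 0. *)
Lemma seminorm_tau_continuous rho J eps : ext_seminorm absK rho ->
  tau_ball P J 0 eps `<=` [set z | (rho z <= 1%:E)%E] -> 0 < eps ->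
  tau_continuous P rho.
Proof.
move=> hrho ball_le1 eps0 x0 N.
have near d x : 0 < d -> tau_ball P J x0 (d * eps) x -> (rho (x - x0)%R <= d%:E)%E.
  move=> d0 xball; apply: seminorm_le_on_ball hrho d0 ball_le1 _.
  by rewrite /tau_ball /= subr0.
have up x : (rho x <= rho x0 + rho (x - x0)%R)%E.
  by have := seminorm_triangle x0 (x - x0) hrho; rewrite [x0 + _]addrC subrK.
have dn x : (rho x0 <= rho x + rho (x - x0)%R)%E.
  have := seminorm_triangle x (x0 - x) hrho.
  by rewrite [x + _]addrC subrK seminorm_subC.
case E: (rho x0) => [r| |] Nnbhs; last by have := seminorm_ge0 x0 hrho; rewrite E.
- have [d d0 dN] := nbhs_EFin_ball Nnbhs.
  exists J, (d / 2 * eps); split; first by rewrite mulr_gt0 ?divr_gt0.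
  move=> x /(near _ _ (divr_gt0 d0 (ltr0Sn _ 1))); rewrite /preimage /=.
  have := up x; have := dn x; rewrite E.
  case: (rho (x - x0)) (seminorm_ge0 (x - x0) hrho) => [q| |] // _.
  case: (rho x) (seminorm_ge0 x hrho) => [s| |] // _.
  rewrite -!EFinD !lee_fin => h1 h2 h3; apply: dN.
  by rewrite ltr_norml; apply/andP; split; lra.
- exists J, (1 * eps); split; first by rewrite mul1r.
  move=> x /(near _ _ ltr01); rewrite /preimage /=.
  have := dn x; rewrite E.
  case: (rho (x - x0)) (seminorm_ge0 (x - x0) hrho) => [q| |] // _.
  case: (rho x) => [s| |] // _ _.
  exact: nbhs_singleton Nnbhs.
Qed.

Lemma minkowski_tau_continuous U : absolutely_convex absK U -> tau_nbhs P 0 U ->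
  tau_continuous P (minkowski_fun inK U).
Proof.
move=> hU Unbhs; have U0 := tau_nbhs_mem Unbhs.
have [J [eps [eps0 ballU]]] := Unbhs.
apply: (seminorm_tau_continuous (minkowski_seminorm hU U0) _ eps0) => z /ballU.
exact: minkowski_le1.
Qed.

Lemma minkowski_eq0 U x : absolutely_convex absK U -> tau_hausdorff P ->
  tau_bounded inK P U -> minkowski_fun inK U x = 0%E -> x = 0.
Proof.
move=> hU hT hB mkx0; apply: tau_hausdorff_eq0 hT _ => i.
have [B ltB] := absconvex_bounded_seminorm_ub (hP i) (tau_nbhs0_lt1 i) hU hB.
apply: (@eq0_of_scale_bounded _ _ B (seminorm_ge0 x (hP i))) => s s0.
by rewrite -seminormZ_inK //; apply: ltB; exact: minkowski_eq0_ray hU _ _ mkx0 s0.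
Qed.

End Topology.
End Scalars.

Theorem proposition5p6 (R : realType) (K : numFieldType) (absK : K -> R)
  (inK : R -> K) (hK : RorC absK inK) (X : lmodType K)
  (I : Type) (P : I -> X -> \bar R)
  (hP : forall i, ext_seminorm absK (P i))
  (hT2 : tau_hausdorff P) :
  (forall A : set X, absolutely_convex absK A -> tau_bounded inK P A ->
     A `<=` X_fin absK P) /\
  (forall U : set X, absolutely_convex absK U -> tau_nbhs P 0 U ->
     tau_bounded inK P U ->
     [/\ ext_norm absK (minkowski_fun inK U), tau_continuous P (minkowski_fun inK U) &
         X_fin absK P = [set x | (minkowski_fun inK U x < +oo)%E]]).
Proof.
split=> [A hA hB | U hU Unbhs hB]; first exact: (absconvex_bounded_sub_Xfin hK hA hB).
have mk_seminorm := minkowski_seminorm hK hU (tau_nbhs_mem hK hP Unbhs).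
have mk_cont := minkowski_tau_continuous hK hP hU Unbhs.
split=> //; first by split=> // x; exact: (minkowski_eq0 hK hP hU hT2 hB).
apply/seteqP; split=> x; first by move/(_ _ mk_seminorm mk_cont).
move=> /minkowski_lt[l [u [_ Uu -> _]]]; apply: (Xfin_scale hK).
exact: (absconvex_bounded_sub_Xfin hK hU hB Uu).
Qed.
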